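(* Fix the setting described in the context, constants $\varphi_0>0$, $\varphi_1\ge0$, and a probability distribution $\mathbf{q}^{\mathrm{hon}}$ on $\mathcal{C}'$. Define $$r_{\mathrm{best}}=\sup_{g}\big(g(\mathbf{q}^{\mathrm{hon}})-\hat T(\mathbf{g})\big),$$ where the supremum is over all crossover min-tradeoff functions $g(\mathbf{q})=\mathbf{g}\cdot\mathbf{q}+k_g$. Then $$r_{\mathrm{best}}=\inf_{J,\boldsymbol\lambda}\Big\{W(\rho^{g}_J)+\hat T^*(\boldsymbol\lambda)\ :\ \mathbf{q}^{\mathrm{hon}}-\boldsymbol\Phi[\rho^{t}_J]-\boldsymbol\lambda=\mathbf{0}\Big\} =\inf_{J,\boldsymbol\lambda,\boldsymbol\nu}\Big\{W(\rho^{g}_J)+s\Big(\tfrac12\textstyle\sum_c\nu_c\Big)\ :\ \mathbf{q}^{\mathrm{hon}}-\boldsymbol\Phi[\rho^{t}_J]-\boldsymbol\lambda=\mathbf{0},\ -\boldsymbol\nu\le\boldsymbol\lambda\le\boldsymbol\nu\Big\},$$ where $J$ ranges over Choi matrices and $\boldsymbol\lambda,\boldsymbol\nu\in\mathbb{R}^{|\mathcal{C}'|}$ (inequalities componentwise). Furthermore, let $L(\rho,\boldsymbol\nu)$ be an affine function such that $L(\rho^{g}_J,\boldsymbol\nu)\le W(\rho^{g}_J)+s(\frac12\sum_c\nu_c)$ for all Choi matrices $J$ and all $\boldsymbol\nu$, and let $$r_{\mathrm{SDP}}=\inf_{J,\boldsymbol\lambda,\boldsymbol\nu}\Big\{L(\rho^{g}_J,\boldsymbol\nu)\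 :\ \mathbf{q}^{\mathrm{hon}}-\boldsymbol\Phi[\rho^{t}_J]-\boldsymbol\lambda=\mathbf{0},\ -\boldsymbol\nu\le\boldsymbol\lambda\le\boldsymbol\nu\Big\},$$ assumed finite. Then there exists $\mathbf{g}^\star\in\mathbb{R}^{|\mathcal{C}'|}$ (an optimal Lagrange dual variable for the equality constraint) with $$r_{\mathrm{SDP}}=\inf_{(J,\boldsymbol\lambda,\boldsymbol\nu)\in\mathcal{D}'}\Big(L(\rho^{g}_J,\boldsymbol\nu)+\mathbf{g}^\star\cdot\big(\mathbf{q}^{\mathrm{hon}}-\boldsymbol\Phi[\rho^{t}_J]-\boldsymbol\lambda\big)\Big),$$ where $\mathcal{D}'$ is the set of triples with $J$ a Choi matrix and $-\boldsymbol\nu\le\boldsymbol\lambda\le\boldsymbol\nu$; and for any such $\mathbf{g}^\star$ there is a crossover min-tradeoff function $g^\star$ with gradient $\mathbf{g}^\star$ satisfying $$g^\star(\mathbf{q}^{\mathrm{hon}})-\hat T(\mathbf{g}^\star)\ge r_{\mathrm{SDP}}.$$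
   Context: Let $A,A',B$ be finite-dimensional quantum systems and let $\ket{\xi^g},\ket{\xi^t}$ be pure states on $AA'$. A Choi matrix is an operator $J\ge0$ on $A'B$ with $\operatorname{Tr}_B J=\mathbb{1}_{A'}$ (Choi state of a channel $\mathcal{E}:A'\to B$, acting as $\mathcal{E}(X)=\operatorname{Tr}_{A'}[J(X^T\otimes\mathbb{1}_B)]$). For a Choi matrix $J$ define the states on $AB$ $$\rho^{g}_J=\operatorname{Tr}_{A'}\big[(\mathbb{1}_A\otimes J)(\ket{\xi^g}\!\bra{\xi^g}^{T_{A'}}\otimes\mathbb{1}_B)\big],\quad \rho^{t}_J=\operatorname{Tr}_{A'}\big[(\mathbb{1}_A\otimes J)(\ket{\xi^t}\!\bra{\xi^t}^{T_{A'}}\otimes\mathbb{1}_B)\big].$$ $W$ is a real-valued, nonnegative, convex function of states on $AB$. $\mathcal{C}'$ is a finite alphabet, and $\boldsymbol\Phi[\rho]=(\Phi_c[\rho])_{c\in\mathcal{C}'}$ with $\Phi_c[\rho]=\operatorname{Tr}(P_c\rho)$ for a POVM $\{P_c\}_{c\in\mathcal{C}'}$ on $AB$ (so $\boldsymbol\Phi[\rho]$ is a probability distribution). The crossover rate function is $r_{\mathrm{cross}}(\mathbf{q})=\inf\{W(\rho^{g}_J): J \text{ Choi},\ \boldsymbol\Phi[\rho^{t}_J]=\mathbf{q}\}$ (infimum of the empty set is $+\infty$). A crossover min-tradeoff function is an affine function $g(\mathbf{q})=\mathbf{g}\cdot\mathbf{q}+k_g$ ($\mathbf{g}\in\mathbb{R}^{|\mathcal{C}'|}$,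 $k_g\in\mathbb{R}$) with $g(\mathbf{q})\le r_{\mathrm{cross}}(\mathbf{q})$ for every probability distribution $\mathbf{q}$ on $\mathcal{C}'$. For $\varphi_0>0,\varphi_1\ge0$: $\hat T(\mathbf{g})=\varphi_0(\max(\mathbf{g})-\min(\mathbf{g}))^2+\varphi_1(\max(\mathbf{g})-\min(\mathbf{g}))$; $s(x)=(x-\varphi_1)^2/(4\varphi_0)$ if $x\ge\varphi_1$ and $s(x)=0$ otherwise; $\hat T^*(\boldsymbol\lambda)=s(\|\boldsymbol\lambda\|_1/2)$ if $\sum_c\lambda_c=0$ and $+\infty$ otherwise. *)

From HB Require Import structures.
From mathcomp Require Import all_boot all_order all_algebra.
From mathcomp Require Import all_classical all_reals.
From mathcomp Require Import ereal.
From mathcomp Require Import complex.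
Set Implicit Arguments. Unset Strict Implicit. Unset Printing Implicit Defensive.
Import Order.TTheory GRing.Theory Num.Theory.
Local Open Scope ring_scope.

Section QDefs.
Variable R : realType.
Local Notation C := R[i].

Definition op (T : finType) := T -> T -> C.

Definition idop (T : finType) : op T := fun i j => (i == j)%:R.
Definition mulop (T : finType) (X Y : op T) : op T :=
  fun i k => \sum_j X i j * Y j k.
Definition addop (T : finType) (X Y : op T) : op T := fun i j => X i j + Y i j.
Definition rscaleop (T : finType) (t : R) (X : op T) : op T :=
  fun i j => (t%:C)%C * X i j.
Definition trace (T : finType) (X : op T) : C := \sum_i X i i.
Definition kron (T U : finType) (X : op T) (Y : op U) : op (T * U)%type :=
  fun i j => X i.1 j.1 * Y i.2 j.2.
Definition reassoc (T U V : finType) (M : op (T * (U * V))%type) : op (T * U * V)%type :=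
  fun i j => M (i.1.1, (i.1.2, i.2)) (j.1.1, (j.1.2, j.2)).
Definition ptrace_mid (T U V : finType) (M : op (T * U * V)%type) : op (T * V)%type :=
  fun i j => \sum_u M ((i.1, u), i.2) ((j.1, u), j.2).
Definition ptrace2 (U V : finType) (M : op (U * V)%type) : op U :=
  fun i j => \sum_v M (i, v) (j, v).
Definition ptransp2 (T U : finType) (M : op (T * U)%type) : op (T * U)%type :=
  fun i j => M (i.1, j.2) (j.1, i.2).
Definition ketbra (T : finType) (xi : T -> C) : op T :=
  fun i j => xi i * conjc (xi j).

Definition psd (T : finType) (X : op T) : Prop :=
  forall v : T -> C, 0 <= \sum_i \sum_j conjc (v i) * X i j * v j.
Definition is_state (T : finType) (rho : op T) : Prop :=
  psd rho /\ trace rho = 1.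
Definition is_unit_vector (T : finType) (xi : T -> C) : Prop :=
  \sum_i conjc (xi i) * xi i = 1.
Definition is_choi (Ap B : finType) (J : op (Ap * B)%type) : Prop :=
  psd J /\ ptrace2 J = @idop Ap.
Definition is_povm (T Cc : finType) (P : Cc -> op T) : Prop :=
  (forall c, psd (P c)) /\ (forall i j, \sum_c P c i j = @idop T i j).

Definition rhoJ (A Ap B : finType) (xi : (A * Ap)%type -> C) (J : op (Ap * B)%type)
  : op (A * B)%type :=
  ptrace_mid (mulop (reassoc (kron (@idop A) J))
                    (kron (ptransp2 (ketbra xi)) (@idop B))).

(* Phi_c[rho] = Tr(P_c rho); it is real for states, we take its real part
   as an element of R *)
Definition Phi (T Cc : finType) (P : Cc -> op T) (rho : op T) : Cc -> R :=
  fun c => complex.Re (trace (mulop (P c) rho)).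

Definition is_prob (Cc : finType) (q : Cc -> R) : Prop :=
  (forall c, 0 <= q c) /\ \sum_c q c = 1.

Definition dotv (Cc : finType) (g q : Cc -> R) : R := \sum_c g c * q c.

Definition convex_on_states (T : finType) (W : op T -> R) : Prop :=
  forall (rho sigma : op T) (t : R), is_state rho -> is_state sigma ->
    0 <= t <= 1 ->
    W (addop (rscaleop t rho) (rscaleop (1 - t) sigma))
      <= t * W rho + (1 - t) * W sigma.

(* max(g) - min(g), written as max_{c,d} (g c - g d) (the c = d terms are 0) *)
Definition spread (Cc : finType) (g : Cc -> R) : R :=
  \big[Num.max/0]_(c : Cc) \big[Num.max/0]_(d : Cc) (g c - g d).

Definition That (phi0 phi1 : R) (Cc : finType) (g : Cc -> R) : R :=
  phi0 * (spread g) ^+ 2 + phi1 * spread g.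

Definition sfun (phi0 phi1 : R) (x : R) : R :=
  if phi1 <= x then (x - phi1) ^+ 2 / (4 * phi0) else 0.

Definition l1norm (Cc : finType) (l : Cc -> R) : R := \sum_c `|l c|.

Definition TstarHat (phi0 phi1 : R) (Cc : finType) (l : Cc -> R) : \bar R :=
  if \sum_c l c == 0 then (sfun phi0 phi1 (l1norm l / 2))%:E else +oo%E.

Definition r_cross (A Ap B Cc : finType) (W : op (A * B)%type -> R)
  (xig xit : (A * Ap)%type -> C) (P : Cc -> op (A * B)%type) (q : Cc -> R) : \bar R :=
  ereal_inf [set (W (rhoJ xig J))%:E | J in
              [set J : op (Ap * B)%type | is_choi J /\ Phi P (rhoJ xit J) = q]].

Definition is_crossover_mtf (A Ap B Cc : finType) (W : op (A * B)%type -> R)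
  (xig xit : (A * Ap)%type -> C) (P : Cc -> op (A * B)%type) (g : Cc -> R) (k : R)
  : Prop :=
  forall q : Cc -> R, is_prob q ->
    ((dotv g q + k)%:E <= r_cross W xig xit P q)%E.

Definition is_affine_L (T Cc : finType) (L : op T -> (Cc -> R) -> R) : Prop :=
  forall (rho1 rho2 : op T) (nu1 nu2 : Cc -> R) (t : R),
    L (addop (rscaleop t rho1) (rscaleop (1 - t) rho2))
      (fun c => t * nu1 c + (1 - t) * nu2 c)
    = t * L rho1 nu1 + (1 - t) * L rho2 nu2.

End QDefs.

Section Programs.
Variables (R : realType) (A Ap B Cc : finType).
Variables (W : op R (A * B)%type -> R) (xig xit : (A * Ap)%type -> R[i]).
Variables (P : Cc -> op R (A * B)%type) (phi0 phi1 : R) (qhon : Cc -> R).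

Definition eq_constr (J : op R (Ap * B)%type) (l : Cc -> R) : Prop :=
  forall c, qhon c - Phi P (rhoJ xit J) c - l c = 0.

Definition box_constr (l nu : Cc -> R) : Prop :=
  forall c, - nu c <= l c <= nu c.

Definition r_best : \bar R :=
  ereal_sup [set z | exists (g : Cc -> R) (k : R),
    is_crossover_mtf W xig xit P g k /\
    z = (dotv g qhon + k - That phi0 phi1 g)%:E].

Definition primal1 : \bar R :=
  ereal_inf [set z | exists (J : op R (Ap * B)%type) (l : Cc -> R),
    is_choi J /\ eq_constr J l /\
    z = ((W (rhoJ xig J))%:E + TstarHat phi0 phi1 l)%E].

Definition primal2 : \bar R :=
  ereal_inf [set z | exists (J : op R (Ap * B)%type) (l nu : Cc -> R),
    is_choi J /\ eq_constr J l /\ box_constr l nu /\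
    z = (W (rhoJ xig J) + sfun phi0 phi1 ((\sum_c nu c) / 2))%:E].

Definition r_SDP (L : op R (A * B)%type -> (Cc -> R) -> R) : \bar R :=
  ereal_inf [set z | exists (J : op R (Ap * B)%type) (l nu : Cc -> R),
    is_choi J /\ eq_constr J l /\ box_constr l nu /\
    z = (L (rhoJ xig J) nu)%:E].

Definition lagr_dual (L : op R (A * B)%type -> (Cc -> R) -> R)
  (gs : Cc -> R) : \bar R :=
  ereal_inf [set z | exists (J : op R (Ap * B)%type) (l nu : Cc -> R),
    is_choi J /\ box_constr l nu /\
    z = (L (rhoJ xig J) nu +
         dotv gs (fun c => qhon c - Phi P (rhoJ xit J) c - l c))%:E].

End Programs.

From HB Require Import structures.
From mathcomp Require Import all_boot all_order all_algebra.
From mathcomp Require Import all_classical all_reals.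
From mathcomp Require Import ereal.
From mathcomp Require Import complex.
From mathcomp Require Import ring lra.
Import Order.TTheory GRing.Theory Num.Theory.
Local Open Scope ring_scope.
(* Weak duality r_best <= primal1 is the Fenchel-Young inequality pairing T^
   with its conjugate T^*, and primal1 <= primal2 because |lambda| <= nu and s is
   nondecreasing.  For the converse, primal2 is a convex program in
   (J, lambda, nu) whose constraint map lambda |-> q^hon - Phi[rho^t_J] - lambda
   is affine and onto, so in finite dimension it has an exact Lagrange
   multiplier g; such a multiplier is built one coordinate at a time by
   separating, on the real line, the feasible points with positive and with
   negative residual.  Choosing (lambda, nu) that attain equality in
   Fenchel-Young turns g into a crossover min-tradeoff function of value
   primal2.  The same argument applied to an affine minorant L yields the
   statement about r_SDP. *)

Set Implicit Arguments. Unset Strict Implicit. Unset Printing Implicit Defensive.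

Lemma sumr_delta (V : pzSemiRingType) (T : finType) (F : T -> V) (i : T) :
  \sum_j F j * (j == i)%:R = F i.
Proof.
by rewrite (bigD1 i) //= eqxx mulr1 big1 ?addr0 // => j /negbTE ->; rewrite mulr0.
Qed.

Lemma sumr_delta_l (V : pzSemiRingType) (T : finType) (F : T -> V) (i : T) :
  \sum_j (i == j)%:R * F j = F i.
Proof.
rewrite (bigD1 i) //= eqxx mul1r big1 ?addr0 // => j.
by rewrite eq_sym => /negbTE ->; rewrite mul0r.
Qed.

Lemma sum_pairE (V : nmodType) (I J : finType) (F : I * J -> V) :
  \sum_p F p = \sum_i \sum_j F (i, j).
Proof. by rewrite pair_bigA; apply: eq_bigr => -[]. Qed.

Lemma dotvB (R : realType) (Cc : finType) (g u v : Cc -> R) :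
  dotv g (fun c => u c - v c) = dotv g u - dotv g v.
Proof. by rewrite /dotv -sumrB; apply: eq_bigr => c _; rewrite mulrBr. Qed.

Section ConvexDuality.
Local Open Scope classical_set_scope.
Variable R : realType.

(* The last hypothesis says that the point of the segment [p, q] on the axis
   [p.1 = 0] lies at height at least m; the multiplier is then the supremum of
   the slopes [(m - p.2) / p.1] over the points with [p.1 > 0]. *)
Lemma scalar_multiplier (S : set (R * R)) (m : R) :
  (exists2 p, S p & 0 < p.1) -> (exists2 p, S p & p.1 < 0) ->
  (forall p, S p -> p.1 = 0 -> m <= p.2) ->
  (forall p q, S p -> S q -> 0 < p.1 -> q.1 < 0 ->
     m * (p.1 - q.1) <= p.1 * q.2 - q.1 * p.2) ->
  exists a, forall p, S p -> m <= p.2 + a * p.1.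
Proof.
move=> [p0 Sp0 p0_gt0] [q0 Sq0 q0_lt0] zero mix.
pose lo := [set (m - p.2) / p.1 | p in [set p | S p /\ 0 < p.1]].
pose hi := [set (q.2 - m) / - q.1 | q in [set q | S q /\ q.1 < 0]].
have lo_le_hi a b : lo a -> hi b -> a <= b.
  move=> [p [Sp p_gt0] <-] [q [Sq q_lt0] <-].
  rewrite ler_pdivrMr // mulrAC ler_pdivlMr ?oppr_gt0 //.
  have := mix p q Sp Sq p_gt0 q_lt0; nra.
exists (sup lo) => p Sp.
case: (ltgtP p.1 0) => [p_lt0|p_gt0|p_eq0]; last by rewrite p_eq0 mulr0 addr0 zero.
- have : sup lo <= (p.2 - m) / - p.1.
    apply: ge_sup; first by exists ((m - p0.2) / p0.1), p0.
    by move=> a lo_a; apply: lo_le_hi lo_a _; exists p.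
  rewrite ler_pdivlMr ?oppr_gt0 //; nra.
- have : (m - p.2) / p.1 <= sup lo.
    apply: ub_le_sup; last by exists p.
    by exists ((q0.2 - m) / - q0.1) => a lo_a; apply: lo_le_hi lo_a _; exists q0.
  rewrite ler_pdivrMr //; nra.
Qed.

Variables (Cc : finType) (X : Type).
Variables (feas : X -> Prop) (res : X -> Cc -> R) (obj : X -> R) (m : R).
Hypothesis convex_res_obj : forall x y (t : R), feas x -> feas y -> 0 < t < 1 ->
  exists z, [/\ feas z, (forall c, res z c = t * res x c + (1 - t) * res y c) &
     obj z <= t * obj x + (1 - t) * obj y].
Hypothesis res_surj : forall u, exists2 x, feas x & res x = u.
Hypothesis obj_ge_on_zero_res : forall x, feas x -> res x =1 (fun=> 0) -> m <= obj x.

Definition lagr (g : Cc -> R) (x : X) : R := obj x + \sum_c g c * res x c.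

Definition feas_supp (s : seq Cc) (x : X) : Prop :=
  feas x /\ {in [predC s], forall c, res x c = 0}.

Lemma feas_supp_cons c s x : feas_supp (c :: s) x -> res x c = 0 -> feas_supp s x.
Proof.
move=> [feas_x supp_x] res_c; split=> // d; rewrite inE.
by case: (eqVneq d c) => [-> //|ne_dc ds]; apply: supp_x; rewrite !inE negb_or ne_dc.
Qed.

Section ExtendMultiplier.
Variables (c : Cc) (s : seq Cc) (g : Cc -> R).
Hypothesis g_on_s : forall x, feas_supp s x -> m <= lagr g x.

Lemma lagr_crossing x y : feas_supp (c :: s) x -> feas_supp (c :: s) y ->
  0 < res x c -> res y c < 0 ->
  m * (res x c - res y c) <= res x c * lagr g y - res y c * lagr g x.
Proof.
move=> [feas_x supp_x] [feas_y supp_y] rx_gt0 ry_lt0.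
have den_gt0 : 0 < res x c - res y c by rewrite subr_gt0 (lt_trans ry_lt0).
pose t := - res y c / (res x c - res y c).
have t01 : 0 < t < 1 by rewrite divr_gt0 ?oppr_gt0 //= ltr_pdivrMr // mul1r; lra.
have [z [feas_z res_z obj_z]] := convex_res_obj feas_x feas_y t01.
have supp_z : feas_supp s z.
  apply: (@feas_supp_cons c); last by rewrite res_z /t; field; rewrite gt_eqF.
  by split=> // d d_out; rewrite res_z supp_x ?supp_y // !mulr0 addr0.
have lagr_z : lagr g z <= t * lagr g x + (1 - t) * lagr g y.
  rewrite /lagr mulrDr [_ * (obj y + _)]mulrDr addrACA lerD //.
  rewrite !mulr_sumr -big_split /= le_eqVlt; apply/orP; left; apply/eqP.
  by apply: eq_bigr => d _; rewrite res_z; ring.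
have := le_trans (g_on_s supp_z) lagr_z.
have -> : t * lagr g x + (1 - t) * lagr g y =
    (res x c * lagr g y - res y c * lagr g x) / (res x c - res y c).
  by rewrite /t; field; rewrite gt_eqF.
by rewrite ler_pdivlMr.
Qed.

Lemma lagr_extend : exists a, forall x, feas_supp (c :: s) x ->
  m <= lagr g x + a * res x c.
Proof.
have at_c r : exists2 x, feas_supp (c :: s) x & res x c = r.
  have [x feas_x res_x] := res_surj (fun d => if d == c then r else 0).
  exists x; last by rewrite res_x eqxx.
  by split=> // d; rewrite res_x !inE negb_or => /andP[/negbTE -> _].
pose S := [set (res x c, lagr g x) | x in feas_supp (c :: s)].
have [a Ha] : exists a, forall p, S p -> m <= p.2 + a * p.1.
  apply: scalar_multiplier.
  - by have [x Sx res_c] := at_c 1; exists (res x c, lagr g x); [exists x | rewrite res_c].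
  - have [x Sx res_c] := at_c (-1); exists (res x c, lagr g x); first by exists x.
    by rewrite res_c ltrN10.
  - by move=> _ [x Sx <-] /= res_c; apply/g_on_s/(feas_supp_cons Sx).
  by move=> _ _ [x Sx <-] [y Sy <-]; apply: lagr_crossing.
by exists a => x Sx; apply: (Ha (res x c, lagr g x)); exists x.
Qed.
End ExtendMultiplier.

Lemma lagrange_multiplier_supp (s : seq Cc) :
  exists g, forall x, feas_supp s x -> m <= lagr g x.
Proof.
elim: s => [|c s [g g_on_s]].
  exists (fun=> 0) => x [feas_x supp_x].
  rewrite /lagr big1 ?addr0; last by move=> c _; rewrite mul0r.
  by apply: obj_ge_on_zero_res => // c; apply: supp_x.
have [a Ha] := lagr_extend c g_on_s.
exists (fun d => g d + a * (d == c)%:R) => x /Ha.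
suff -> : lagr (fun d => g d + a * (d == c)%:R) x = lagr g x + a * res x c by [].
rewrite /lagr -addrA -(sumr_delta (fun d => a * res x d) c) -big_split /=.
by congr (_ + _); apply: eq_bigr => d _; ring.
Qed.

Lemma lagrange_multiplier : exists g : Cc -> R, forall x, feas x ->
  m <= obj x + \sum_c g c * res x c.
Proof.
have [g Hg] := lagrange_multiplier_supp (enum Cc).
by exists g => x feas_x; apply: Hg; split=> // c; rewrite !inE mem_enum.
Qed.
End ConvexDuality.

Section PsdOperators.
Variable R : realType.
Local Notation C := R[i].
Implicit Types (T : finType).

Definition qform T (X : op R T) (v : T -> C) : C :=
  \sum_i \sum_j conjc (v i) * X i j * v j.

Lemma ger0_conjc (z : C) : 0 <= z -> conjc z = z.
Proof. by move=> z_ge0; apply: conj_Creal; apply: ger0_real. Qed.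

Lemma qform0 T (X : op R T) : qform X (fun=> 0) = 0.
Proof. by rewrite /qform big1 // => i _; rewrite big1 // => j _; rewrite mulr0. Qed.

Lemma qform_shift T (X : op R T) v t i0 :
  qform X (fun k => v k + t * (k == i0)%:R) = qform X v
    + conjc t * (\sum_l X i0 l * v l) + (\sum_k conjc (v k) * X k i0) * t
    + conjc t * t * X i0 i0.
Proof.
rewrite /qform.
transitivity (\sum_k \sum_l (conjc (v k) * X k l * v l
   + conjc (v k) * X k l * t * (l == i0)%:R
   + (conjc t * (X k l * v l)) * (k == i0)%:R
   + (conjc t * X k l * t * (k == i0)%:R) * (l == i0)%:R)).
  apply: eq_bigr => k _; apply: eq_bigr => l _.
  by rewrite rmorphD rmorphM /= conjc_nat; ring.
under eq_bigr => k _ do rewrite !big_split /= !sumr_delta -mulr_suml -mulr_sumr.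
by rewrite !big_split /= !sumr_delta -!mulr_suml; ring.
Qed.

Lemma qform_pair T (X : op R T) a b i j :
  qform X (fun k => a * (k == i)%:R + b * (k == j)%:R) =
  conjc a * a * X i i + conjc a * X i j * b + conjc b * X j i * a
    + conjc b * b * X j j.
Proof.
have -> : (fun k => a * (k == i)%:R + b * (k == j)%:R) =
    (fun k => (fun k => 0 + a * (k == i)%:R) k + b * (k == j)%:R).
  by apply/funext => k; rewrite add0r.
rewrite !qform_shift qform0 rmorph0.
rewrite [\sum_l _ * 0]big1 => [|l _]; last by rewrite mulr0.
rewrite [\sum_k 0 * _]big1 => [|k _]; last by rewrite mul0r.
have -> : \sum_l X j l * (0 + a * (l == i)%:R) = X j i * a.
  rewrite -(sumr_delta (fun l => X j l * a) i).
  by apply: eq_bigr => l _; rewrite add0r; ring.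
have -> : \sum_k conjc (0 + a * (k == i)%:R) * X k j = conjc a * X i j.
  rewrite -(sumr_delta (fun k => conjc a * X k j) i); apply: eq_bigr => k _.
  by rewrite add0r rmorphM /= conjc_nat; ring.
ring.
Qed.

Section PsdEntries.
Variables (T : finType) (X : op R T).
Hypothesis X_psd : psd X.

Lemma psd_diag_ge0 i : 0 <= X i i.
Proof.
have := X_psd (fun k => 1 * (k == i)%:R + 0 * (k == i)%:R).
by rewrite -/(qform X _) qform_pair rmorph0 rmorph1 !(mul0r, mulr0, mul1r, addr0).
Qed.

(* The form at [a e_i + b e_j] is real; [b = 1] and [b = 'i] give the real
   and the imaginary part of [X i j - conjc (X j i)]. *)
Lemma psd_hermitian i j : X i j = conjc (X j i).
Proof.
have diag_real z k : conjc (conjc z * z * X k k) = conjc z * z * X k k.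
  by rewrite !rmorphM /= conjcK (ger0_conjc (psd_diag_ge0 k)) (mulrC (conjc z)).
have cross_real a b : conjc a * X i j * b + conjc b * X j i * a =
    a * conjc (X i j) * conjc b + b * conjc (X j i) * conjc a.
  set v := fun k => a * (k == i)%:R + b * (k == j)%:R.
  have E : conjc a * X i j * b + conjc b * X j i * a =
      qform X v - conjc a * a * X i i - conjc b * b * X j j.
    by rewrite qform_pair; ring.
  transitivity (conjc (conjc a * X i j * b + conjc b * X j i * a)).
    by rewrite E !rmorphB /= !diag_real (@ger0_conjc (qform X v) (X_psd v)).
  by rewrite !rmorphD !rmorphM /= !conjcK.
have [I conj_I sqr_I] : exists2 I : C, conjc I = - I & I * I = -1.
  exists 'i%C; last by rewrite -expr2 sqr_i.
  by apply/eqP; rewrite eq_complex /= oppr0 !eqxx.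
have := cross_real 1 1; have := cross_real 1 I.
rewrite conj_I !rmorph1 !(mul1r, mulr1).
move/eqP; rewrite -subr_eq0 => /eqP L2; move/eqP; rewrite -subr_eq0 => /eqP L1.
set x := X i j in L1 L2 *; set y := X j i in L1 L2 *.
set p := conjc x in L1 L2; set q := conjc y in L1 L2 *.
set l1 := (X in X = 0) in L1; set l2 := (X in X = 0) in L2.
suff /eqP : (x - q) *+ 2 = 0 by rewrite mulrn_eq0 /= subr_eq0 => /eqP.
transitivity (l1 - I * l2 + (1 + I * I) * (x - y + p - q)); first by rewrite /l1 /l2; ring.
by rewrite L1 L2 sqr_I; ring.
Qed.

Lemma psd_row_zero i j : X i i = 0 -> X i j = 0.
Proof.
move=> Xii0; apply/eqP/negPn/negP => Xij_neq0.
have Xji_neq0 : conjc (X i j) != 0 by rewrite conjc_eq0.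
have Xjj_real := ger0_conjc (psd_diag_ge0 j).
pose t := - (X j j + 1) / conjc (X i j).
have := X_psd (fun k => t * (k == i)%:R + 1 * (k == j)%:R).
rewrite -/(qform X _) qform_pair Xii0 (psd_hermitian j i) rmorph1.
have -> : conjc t = - (X j j + 1) / X i j.
  by rewrite /t rmorphM rmorphN rmorphD rmorph1 /= Xjj_real conjc_inv conjcK.
have -> : - (X j j + 1) / X i j * t * 0 + - (X j j + 1) / X i j * X i j * 1
    + 1 * conjc (X i j) * t + 1 * 1 * X j j = - X j j - 2%:R.
  by rewrite /t; field; rewrite Xij_neq0 Xji_neq0.
move=> ge0; have := addr_ge0 (psd_diag_ge0 j) ge0.
have two_gt0 : (0 : C) < 2%:R by rewrite ltr0n.
by rewrite addrA addrN add0r oppr_ge0 (lt_geF two_gt0).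
Qed.

(* The Schur complement of a nonzero diagonal entry [d = X i0 i0]: subtracting
   [d^-1 |X_(. i0)><X_(. i0)|] keeps X positive semidefinite and clears row i0. *)
Lemma psd_schur_complement i0 : X i0 i0 != 0 ->
  psd (fun i j => X i j - (X i0 i0)^-1 * X i i0 * conjc (X j i0)).
Proof.
move=> d_neq0 v; set d := X i0 i0 in d_neq0 *.
have d_real : conjc d = d by apply: ger0_conjc; apply: psd_diag_ge0.
set be := \sum_l X i0 l * v l.
set ga := \sum_k conjc (v k) * X k i0.
have conj_be : conjc be = ga.
  rewrite /be rmorph_sum; apply: eq_bigr => l _.
  by rewrite rmorphM /= mulrC -psd_hermitian.
have -> : \sum_i \sum_j conjc (v i) * (X i j - d^-1 * X i i0 * conjc (X j i0)) * v j =
    qform X v - d^-1 * ga * be.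
  have be_eq : \sum_j conjc (X j i0) * v j = be.
    by apply: eq_bigr => l _; rewrite -psd_hermitian.
  rewrite -be_eq /ga -mulrA mulr_suml mulr_sumr /qform -sumrB; apply: eq_bigr => i _.
  rewrite !mulr_sumr -sumrB; apply: eq_bigr => j _; ring.
have := X_psd (fun k => v k + (- be / d) * (k == i0)%:R).
rewrite -/(qform X _) qform_shift -/be -/ga.
have -> : conjc (- be / d) = - ga / d by rewrite rmorphM rmorphN /= conjc_inv d_real conj_be.
by have -> : qform X v + - ga / d * be + ga * (- be / d) + - ga / d * (- be / d) * d =
   qform X v - d^-1 * ga * be by field.
Qed.
End PsdEntries.

Lemma psd_rank_one_decomposition_supp T (s : seq T) (Z : op R T) : psd Z ->
  (forall i j, i \notin s -> Z i j = 0) ->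
  exists ws : seq (C * (T -> C)), all (fun w => 0 <= w.1) ws /\
    forall i j, Z i j = \sum_(w <- ws) w.1 * w.2 i * conjc (w.2 j).
Proof.
elim: s Z => [|i0 s IH] Z Z_psd Z_supp.
  by exists [::]; split => // i j; rewrite big_nil Z_supp.
have [Zi0_eq0|Zi0_neq0] := eqVneq (Z i0 i0) 0.
  apply: IH => // i j ins; case: (eqVneq i i0) => [->|ne]; first exact: psd_row_zero.
  by apply: Z_supp; rewrite inE negb_or ne.
have schur_supp i j : i \notin s ->
    Z i j - (Z i0 i0)^-1 * Z i i0 * conjc (Z j i0) = 0.
  move=> ins; case: (eqVneq i i0) => [->|ne].
    by rewrite mulVf // mul1r -psd_hermitian // subrr.
  have i_out : i \notin i0 :: s by rewrite inE negb_or ne.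
  by rewrite (Z_supp i j) ?(Z_supp i i0) // mulr0 mul0r subrr.
have [ws [ws_ge0 Zs]] := IH _ (psd_schur_complement Z_psd Zi0_neq0) schur_supp.
exists (((Z i0 i0)^-1, fun i => Z i i0) :: ws); split.
  by rewrite /= ws_ge0 andbT invr_ge0 psd_diag_ge0.
by move=> i j; rewrite big_cons /= -Zs; ring.
Qed.

Lemma psd_rank_one_decomposition T (Z : op R T) : psd Z ->
  exists ws : seq (C * (T -> C)), all (fun w => 0 <= w.1) ws /\
    forall i j, Z i j = \sum_(w <- ws) w.1 * w.2 i * conjc (w.2 j).
Proof.
move=> Z_psd; apply: psd_rank_one_decomposition_supp (enum T) _ Z_psd _ => i j.
by rewrite mem_enum.
Qed.

Lemma psd_trace_mul_ge0 T (Y Z : op R T) : psd Y -> psd Z -> 0 <= trace (mulop Y Z).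
Proof.
move=> /psd_rank_one_decomposition [ws [ws_ge0 Ys]] Z_psd.
have -> : trace (mulop Y Z) = \sum_(w <- ws) w.1 * qform Z w.2.
  rewrite /trace /mulop /qform.
  under eq_bigr => i _ do under eq_bigr => j _ do rewrite Ys mulr_suml.
  rewrite exchange_big /=.
  under eq_bigr => j _ do rewrite exchange_big /=.
  rewrite exchange_big /=; apply: eq_bigr => w _.
  rewrite mulr_sumr; apply: eq_bigr => j _.
  by rewrite mulr_sumr; apply: eq_bigr => i _; ring.
rewrite big_seq_cond sumr_ge0 // => w /andP[w_in _].
by rewrite mulr_ge0 ?Z_psd //; move/allP: ws_ge0; apply.
Qed.
End PsdOperators.

Section ChoiStates.
Variable R : realType.
Local Notation C := R[i].
Variables (A Ap B : finType).
Local Notation state_vec := ((A * Ap)%type -> C).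
Local Notation choi_op := (op R (Ap * B)%type).

Lemma rhoJE (xi : state_vec) (J : choi_op) a' b' a b :
  rhoJ xi J (a', b') (a, b) =
  \sum_u \sum_y J (u, b') (y, b) * xi (a', u) * conjc (xi (a, y)).
Proof.
rewrite /rhoJ /ptrace_mid /mulop /=; apply: eq_bigr => u _.
rewrite sum_pairE sum_pairE /reassoc /kron /ptransp2 /ketbra /idop /=.
transitivity (\sum_k1 (a' == k1)%:R * \sum_k2 \sum_k3
    (J (u, b') (k2, k3) * xi (k1, u) * conjc (xi (a, k2))) * (k3 == b)%:R).
  apply: eq_bigr => k1 _; rewrite mulr_sumr; apply: eq_bigr => k2 _.
  by rewrite mulr_sumr; apply: eq_bigr => k3 _; ring.
by rewrite sumr_delta_l; apply: eq_bigr => k2 _; rewrite sumr_delta.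
Qed.

Definition xi_contract (xi : state_vec) (v : (A * B)%type -> C) : (Ap * B)%type -> C :=
  fun q => \sum_a conjc (xi (a, q.1)) * v (a, q.2).

Lemma rhoJ_apply (xi : state_vec) (J : choi_op) v a' b' :
  \sum_j rhoJ xi J (a', b') j * v j =
  \sum_u xi (a', u) * \sum_q J (u, b') q * xi_contract xi v q.
Proof.
rewrite sum_pairE.
under eq_bigr => a _ do under eq_bigr => b _ do rewrite rhoJE mulr_suml.
under eq_bigr => a _ do under eq_bigr => b _ do under eq_bigr => u _ do
  rewrite mulr_suml.
rewrite exchange_big /=.
under eq_bigr => b _ do rewrite exchange_big /=.
under eq_bigr => b _ do under eq_bigr => u _ do rewrite exchange_big /=.
rewrite exchange_big /=.
under eq_bigr => u _ do rewrite exchange_big /=.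
apply: eq_bigr => u _; rewrite sum_pairE mulr_sumr; apply: eq_bigr => y _.
rewrite mulr_sumr; apply: eq_bigr => b _; rewrite /xi_contract /= !mulr_sumr.
by apply: eq_bigr => a _; ring.
Qed.

Lemma qform_rhoJ (xi : state_vec) (J : choi_op) v :
  qform (rhoJ xi J) v = qform J (xi_contract xi v).
Proof.
rewrite /qform.
under eq_bigr => i _ do under eq_bigr => j _ do rewrite -mulrA.
under eq_bigr => i _ do rewrite -mulr_sumr.
rewrite sum_pairE.
under eq_bigr => a _ do under eq_bigr => b _ do rewrite rhoJ_apply mulr_sumr.
rewrite exchange_big /=.
under eq_bigr => b _ do rewrite exchange_big /=.
rewrite exchange_big /= sum_pairE; apply: eq_bigr => u _; apply: eq_bigr => b _.
under [RHS]eq_bigr => j _ do rewrite -mulrA.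
rewrite -mulr_sumr /xi_contract /= rmorph_sum mulr_suml; apply: eq_bigr => a _.
by rewrite rmorphM /= conjcK; ring.
Qed.

Lemma psd_rhoJ (xi : state_vec) (J : choi_op) : psd J -> psd (rhoJ xi J).
Proof. by move=> J_psd v; rewrite -/(qform _ v) qform_rhoJ; apply: J_psd. Qed.

Lemma choi_ptraceE (J : choi_op) u y : is_choi J -> \sum_b J (u, b) (y, b) = (u == y)%:R.
Proof. by case=> _ /(congr1 (fun f => f u y)). Qed.

Lemma trace_rhoJ (xi : state_vec) (J : choi_op) :
  is_unit_vector xi -> is_choi J -> trace (rhoJ xi J) = 1.
Proof.
move=> xi_unit J_choi; rewrite /trace sum_pairE -xi_unit sum_pairE.
apply: eq_bigr => a _; under eq_bigr => b _ do rewrite rhoJE.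
rewrite exchange_big /=; apply: eq_bigr => u _; rewrite exchange_big /=.
transitivity (\sum_y (u == y)%:R * (xi (a, u) * conjc (xi (a, y)))).
  apply: eq_bigr => y _; rewrite -(choi_ptraceE u y J_choi) mulr_suml.
  by apply: eq_bigr => b _; rewrite mulrA.
by rewrite sumr_delta_l mulrC.
Qed.

Lemma state_rhoJ (xi : state_vec) (J : choi_op) :
  is_unit_vector xi -> is_choi J -> is_state (rhoJ xi J).
Proof. by move=> xi_unit J_choi; split; [apply: psd_rhoJ; case: J_choi | exact: trace_rhoJ]. Qed.

Lemma rhoJ_comb (xi : state_vec) (J1 J2 : choi_op) t s :
  rhoJ xi (addop (rscaleop t J1) (rscaleop s J2)) =
  addop (rscaleop t (rhoJ xi J1)) (rscaleop s (rhoJ xi J2)).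
Proof.
apply/funext => -[a' b']; apply/funext => -[a b].
rewrite /addop /rscaleop !rhoJE !mulr_sumr -big_split; apply: eq_bigr => u _.
by rewrite !mulr_sumr -big_split; apply: eq_bigr => y _ /=; ring.
Qed.

Lemma choi_convex (J1 J2 : choi_op) t :
  is_choi J1 -> is_choi J2 -> 0 <= t <= 1 ->
  is_choi (addop (rscaleop t J1) (rscaleop (1 - t) J2)).
Proof.
move=> J1_choi J2_choi /andP[t_ge0 t_le1]; split.
  move=> v; rewrite -/(qform _ v).
  have -> : qform (addop (rscaleop t J1) (rscaleop (1 - t) J2)) v =
      (t%:C)%C * qform J1 v + ((1 - t)%:C)%C * qform J2 v.
    rewrite /qform /addop /rscaleop !mulr_sumr -big_split; apply: eq_bigr => i _.
    by rewrite !mulr_sumr -big_split; apply: eq_bigr => j _ /=; ring.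
  by rewrite addr_ge0 // mulr_ge0 ?ler0c ?subr_ge0 //; [apply: J1_choi.1 | apply: J2_choi.1].
apply/funext => u; apply/funext => y.
rewrite /ptrace2 /addop /rscaleop big_split /= -!mulr_sumr !choi_ptraceE //.
by rewrite -mulrDl -rmorphD /= addrC subrK mul1r.
Qed.
End ChoiStates.

Section Measurement.
Variable R : realType.
Local Notation C := R[i].
Variables (T Cc : finType) (P : Cc -> op R T).

Lemma Re_sum (I : finType) (F : I -> C) :
  complex.Re (\sum_i F i) = \sum_i complex.Re (F i).
Proof. by apply: (big_morph _ (fun x y => raddfD _ x y)). Qed.

Lemma sum_Phi (rho : op R T) : is_povm P -> trace rho = 1 -> \sum_c Phi P rho c = 1.
Proof.
move=> [_ P_sum] rho_tr; rewrite /Phi -Re_sum (_ : 1 = complex.Re (1 : C)) // -rho_tr.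
congr complex.Re; rewrite /trace /mulop exchange_big /=; apply: eq_bigr => i _.
rewrite exchange_big /=; under eq_bigr => j _ do rewrite -mulr_suml P_sum /idop.
exact: sumr_delta_l.
Qed.

Lemma Phi_ge0 (rho : op R T) c : is_povm P -> psd rho -> 0 <= Phi P rho c.
Proof.
move=> [P_psd _] rho_psd; have := psd_trace_mul_ge0 (P_psd c) rho_psd.
by rewrite lecE => /andP[].
Qed.

Lemma Phi_comb (X Y : op R T) t s c :
  Phi P (addop (rscaleop t X) (rscaleop s Y)) c = t * Phi P X c + s * Phi P Y c.
Proof.
have ReM (r : R) (z : C) : complex.Re ((r%:C)%C * z) = r * complex.Re z.
  by case: z => a b /=; rewrite mul0r subr0.
rewrite /Phi -!ReM -raddfD /=; congr complex.Re.
rewrite /trace /mulop /addop /rscaleop !mulr_sumr -big_split; apply: eq_bigr => i _.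
by rewrite !mulr_sumr -big_split; apply: eq_bigr => j _ /=; ring.
Qed.
End Measurement.

Lemma prob_Phi_rhoJ (R : realType) (A Ap B Cc : finType) (P : Cc -> op R (A * B)%type)
    (xi : (A * Ap)%type -> R[i]) (J : op R (Ap * B)%type) :
  is_unit_vector xi -> is_povm P -> is_choi J -> is_prob (Phi P (rhoJ xi J)).
Proof.
move=> xi_unit P_povm J_choi; have [rho_psd rho_tr] := state_rhoJ xi_unit J_choi.
by split; [move=> c; apply: Phi_ge0 | apply: sum_Phi].
Qed.

Section Penalty.
Variables (R : realType) (phi0 phi1 : R).
Hypotheses (phi0_gt0 : 0 < phi0) (phi1_ge0 : 0 <= phi1).

Lemma sqr_convex (a b t : R) : 0 <= t <= 1 ->
  (t * a + (1 - t) * b) ^+ 2 <= t * a ^+ 2 + (1 - t) * b ^+ 2.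
Proof.
move=> /andP[t_ge0 t_le1]; rewrite -subr_ge0.
have -> : t * a ^+ 2 + (1 - t) * b ^+ 2 - (t * a + (1 - t) * b) ^+ 2 =
    t * (1 - t) * (a - b) ^+ 2 by ring.
by rewrite mulr_ge0 ?sqr_ge0 // mulr_ge0 // subr_ge0.
Qed.

Lemma max0_ge0 (u : R) : 0 <= Num.max u 0.
Proof. by rewrite le_max lexx orbT. Qed.

Lemma pos_part_convex (a b t : R) : 0 <= t <= 1 ->
  Num.max (t * a + (1 - t) * b) 0 <= t * Num.max a 0 + (1 - t) * Num.max b 0.
Proof.
move=> /andP[t_ge0 t_le1]; have s_ge0 : 0 <= 1 - t by rewrite subr_ge0.
rewrite ge_max; apply/andP; split; last by rewrite addr_ge0 // mulr_ge0 // max0_ge0.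
by rewrite lerD // ler_wpM2l // le_max lexx.
Qed.

Lemma sfunE x : sfun phi0 phi1 x = Num.max (x - phi1) 0 ^+ 2 / (4 * phi0).
Proof.
rewrite /sfun -subr_ge0; case: ifP => [x_ge|x_lt]; first by rewrite max_l.
by rewrite max_r ?expr0n ?mul0r // ltW // ltNge x_lt.
Qed.

Lemma sfun_ge0 x : 0 <= sfun phi0 phi1 x.
Proof. by rewrite sfunE divr_ge0 ?sqr_ge0 // mulr_ge0 // ltW. Qed.

Lemma sfun_convex x y t : 0 <= t <= 1 ->
  sfun phi0 phi1 (t * x + (1 - t) * y) <=
  t * sfun phi0 phi1 x + (1 - t) * sfun phi0 phi1 y.
Proof.
move=> t01; rewrite !sfunE (mulrA t) (mulrA (1 - t)) -mulrDl ler_pM2r ?invr_gt0 ?mulr_gt0 //.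
have -> : t * x + (1 - t) * y - phi1 = t * (x - phi1) + (1 - t) * (y - phi1) by ring.
apply: le_trans (sqr_convex (Num.max (x - phi1) 0) (Num.max (y - phi1) 0) t01).
rewrite ler_pXn2r ?nnegrE ?max0_ge0 ?pos_part_convex //.
by case/andP: t01 => t_ge0 t_le1; rewrite addr_ge0 // mulr_ge0 ?max0_ge0 ?subr_ge0.
Qed.

Lemma sfun_mono x y : x <= y -> sfun phi0 phi1 x <= sfun phi0 phi1 y.
Proof.
move=> le_xy; rewrite !sfunE ler_pM2r ?invr_gt0 ?mulr_gt0 //.
by rewrite ler_pXn2r ?nnegrE ?max0_ge0 // le_max2 // lerD2r.
Qed.

Section Spread.
Variable Cc : finType.

Lemma spreadE (g : Cc -> R) (c0 : Cc) : exists cM cm, [/\ spread g = g cM - g cm,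
  forall c, g c <= g cM & forall c, g cm <= g c].
Proof.
have [cM _ gM] := @arg_maxP _ _ Cc c0 xpredT g erefl.
have [cm _ gm] := @arg_minP _ _ Cc c0 xpredT g erefl.
have {}gM c : g c <= g cM by apply: gM.
have {}gm c : g cm <= g c by apply: gm.
exists cM, cm; split=> //.
apply/le_anti/andP; split.
  apply: bigmax_le => [|c _]; first by rewrite subr_ge0 gM.
  apply: bigmax_le => [|d _]; first by rewrite subr_ge0 gM.
  by rewrite lerB ?gM ?gm.
by apply: le_trans (le_bigmax _ _ cM); apply: le_trans (le_bigmax _ _ cm).
Qed.

Lemma spread_ge0 (g : Cc -> R) : 0 <= spread g.
Proof. exact: bigmax_ge_id. Qed.

Lemma fenchel_young_That (c0 : Cc) (g l : Cc -> R) : \sum_c l c = 0 ->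
  dotv g l - That phi0 phi1 g <= sfun phi0 phi1 (l1norm l / 2).
Proof.
move=> l_sum0; have [cM [cm [spread_g gM gm]]] := spreadE g c0.
set sp := spread g in spread_g *; set x := l1norm l / 2.
have sp_ge0 : 0 <= sp := spread_ge0 g.
have dotv_le : dotv g l <= sp * x.
  (* As [sum l = 0], g can be recentred at the midpoint of its range. *)
  pose mid := (g cM + g cm) / 2.
  have -> : dotv g l = \sum_c (g c - mid) * l c.
    rewrite (eq_bigr (fun c => g c * l c - mid * l c)); last by move=> c _; ring.
    by rewrite sumrB -mulr_sumr l_sum0 mulr0 subr0.
  have -> : sp * x = \sum_c sp / 2 * `|l c| by rewrite -mulr_sumr /x /l1norm; ring.
  apply: ler_sum => c _; apply: le_trans (ler_norm _) _; rewrite normrM.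
  rewrite ler_wpM2r // ler_norml; have := gM c; have := gm c; rewrite spread_g /mid; lra.
apply: le_trans (_ : sp * x - That phi0 phi1 g <= _); first by rewrite lerD2r.
rewrite /That -/sp /sfun; case: ifP => [x_ge|x_lt].
  rewrite ler_pdivlMr ?mulr_gt0 // -subr_ge0.
  have -> : (x - phi1) ^+ 2 - (sp * x - (phi0 * sp ^+ 2 + phi1 * sp)) * (4 * phi0) =
    (x - phi1 - 2 * phi0 * sp) ^+ 2 by ring.
  exact: sqr_ge0.
have : sp * (x - phi1) <= 0 by rewrite mulr_ge0_le0 // subr_le0 ltW // ltNge x_lt.
have : 0 <= phi0 * sp ^+ 2 by rewrite mulr_ge0 ?sqr_ge0 // ltW.
lra.
Qed.

(* Equality in Fenchel-Young: put mass [e] on the argmax and [-e] on the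
   argmin of g, where [e = phi1 + 2 phi0 spread g] is the maximiser of
   [spread g * e - sfun e]. *)
Lemma fenchel_young_That_tight (c0 : Cc) (g : Cc -> R) : exists l nu : Cc -> R,
  (forall c, - nu c <= l c <= nu c) /\
  sfun phi0 phi1 ((\sum_c nu c) / 2) + That phi0 phi1 g <= dotv g l.
Proof.
have [cM [cm [spread_g gM gm]]] := spreadE g c0.
set sp := spread g in spread_g *.
have sp_ge0 : 0 <= sp := spread_ge0 g.
set e := phi1 + 2 * phi0 * sp.
have phi1_le_e : phi1 <= e by rewrite lerDl !mulr_ge0 // ltW.
exists (fun c => e * (c == cM)%:R - e * (c == cm)%:R),
       (fun c => e * (c == cM)%:R + e * (c == cm)%:R); split.
  move=> c; have e_ge0 : 0 <= e := le_trans phi1_ge0 phi1_le_e.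
  have : 0 <= e * (c == cM)%:R by rewrite mulr_ge0 ?ler0n.
  have : 0 <= e * (c == cm)%:R by rewrite mulr_ge0 ?ler0n.
  by move=> *; apply/andP; split; lra.
rewrite big_split /= !sumr_delta /dotv.
rewrite (eq_bigr (fun c => g c * e * (c == cM)%:R - g c * e * (c == cm)%:R)); last first.
  by move=> c _; ring.
rewrite sumrB !sumr_delta /sfun /That -/sp.
have -> : (e + e) / 2 = e by field.
rewrite phi1_le_e (_ : (e - phi1) ^+ 2 / (4 * phi0) = phi0 * sp ^+ 2).
  by rewrite /e spread_g le_eqVlt; apply/orP; left; apply/eqP; ring.
by rewrite /e; field; rewrite gt_eqF.
Qed.
End Spread.
End Penalty.

Section CrossoverDuality.
Local Open Scope classical_set_scope.
Variables (R : realType) (A Ap B Cc : finType).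
Variables (xig xit : (A * Ap)%type -> R[i]) (W : op R (A * B)%type -> R).
Variables (P : Cc -> op R (A * B)%type) (phi0 phi1 : R) (qhon : Cc -> R).
Hypotheses (xig_unit : is_unit_vector xig) (xit_unit : is_unit_vector xit).
Hypotheses (W_ge0 : forall rho, is_state rho -> 0 <= W rho) (W_convex : convex_on_states W).
Hypotheses (P_povm : is_povm P) (phi0_gt0 : 0 < phi0) (phi1_ge0 : 0 <= phi1).
Hypothesis qhon_prob : is_prob qhon.

Local Notation choi_op := (op R (Ap * B)%type).
Local Notation D := (choi_op * (Cc -> R) * (Cc -> R))%type.
Local Notation penalised_W := (fun rho nu => W rho + sfun phi0 phi1 ((\sum_c nu c) / 2)).

(* A point is [x = (J, lambda, nu)]; [feasD] is the domain D' of the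
   statement and [resD x] the residual q^hon - Phi[rho^t_J] - lambda. *)
Definition feasD (x : D) := is_choi x.1.1 /\ box_constr x.1.2 x.2.
Definition resD (x : D) : Cc -> R :=
  fun c => qhon c - Phi P (rhoJ xit x.1.1) c - x.1.2 c.

Definition mixD (x y : D) (t : R) : D :=
  (addop (rscaleop t x.1.1) (rscaleop (1 - t) y.1.1),
   fun c => t * x.1.2 c + (1 - t) * y.1.2 c, fun c => t * x.2 c + (1 - t) * y.2 c).

Lemma outcome_exists : exists c : Cc, True.
Proof.
case: (pselect (exists c : Cc, True)) => // no_c; exfalso.
have := qhon_prob.2; rewrite big1 => [|c _]; last by case: no_c; exists c.
by move/eqP; rewrite eq_sym oner_eq0.
Qed.

Lemma feasD_mix x y t : feasD x -> feasD y -> 0 <= t <= 1 -> feasD (mixD x y t).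
Proof.
move=> [Jx_choi box_x] [Jy_choi box_y] t01; split; first exact: choi_convex.
move=> c /=; have /andP[t_ge0 t_le1] := t01.
have /andP[x1 x2] := box_x c; have /andP[y1 y2] := box_y c.
have := ler_wpM2l t_ge0 x1; have := ler_wpM2l t_ge0 x2.
have s_ge0 : 0 <= 1 - t by rewrite subr_ge0.
have := ler_wpM2l s_ge0 y1; have := ler_wpM2l s_ge0 y2.
by rewrite !mulrN => *; apply/andP; split; lra.
Qed.

Lemma resD_mix x y t c : resD (mixD x y t) c = t * resD x c + (1 - t) * resD y c.
Proof. by rewrite /resD /= rhoJ_comb Phi_comb; ring. Qed.

Lemma resD_surj (J0 : choi_op) : is_choi J0 -> forall u, exists2 x, feasD x & resD x = u.
Proof.
move=> J0_choi u; pose l c := qhon c - Phi P (rhoJ xit J0) c - u c.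
exists (J0, l, fun c => `|l c|); first by split=> // c; rewrite -ler_norml.
by apply/funext => c; rewrite /resD /l /=; ring.
Qed.

Lemma crossover_mtf_of_dual_bound (F : op R (A * B)%type -> (Cc -> R) -> R) g m :
  (forall x, feasD x -> m <= F (rhoJ xig x.1.1) x.2 + dotv g (resD x)) ->
  (forall J nu, is_choi J -> F (rhoJ xig J) nu <= penalised_W (rhoJ xig J) nu) ->
  is_crossover_mtf W xig xit P g (m - dotv g qhon + That phi0 phi1 g).
Proof.
move=> dual_bound F_le q q_prob; apply: le_ereal_inf_tmp => _ [J [J_choi Phi_q] <-].
have [c0 _] := outcome_exists.
have [l [nu [box tight]]] := fenchel_young_That_tight phi0_gt0 phi1_ge0 c0 g.
have := dual_bound (J, l, nu) (conj J_choi box).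
rewrite /resD /= !dotvB Phi_q.
have := F_le J nu J_choi; rewrite lee_fin /=; lra.
Qed.

Lemma le_r_best_of_dual_bound F g m :
  (forall x, feasD x -> m <= F (rhoJ xig x.1.1) x.2 + dotv g (resD x)) ->
  (forall J nu, is_choi J -> F (rhoJ xig J) nu <= penalised_W (rhoJ xig J) nu) ->
  (m%:E <= r_best W xig xit P phi0 phi1 qhon)%E.
Proof.
move=> dual_bound F_le; apply: ereal_sup_ubound.
exists g, (m - dotv g qhon + That phi0 phi1 g).
by split; [apply: crossover_mtf_of_dual_bound dual_bound F_le | congr EFin; ring].
Qed.

Lemma r_SDP_dual_attained (F : op R (A * B)%type -> (Cc -> R) -> R) :
  (forall x y t, feasD x -> feasD y -> 0 < t < 1 ->
     F (rhoJ xig (mixD x y t).1.1) (mixD x y t).2 <=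
     t * F (rhoJ xig x.1.1) x.2 + (1 - t) * F (rhoJ xig y.1.1) y.2) ->
  r_SDP xig xit P qhon F \is a fin_num ->
  exists g, forall x, feasD x ->
    fine (r_SDP xig xit P qhon F) <= F (rhoJ xig x.1.1) x.2 + dotv g (resD x).
Proof.
move=> F_convex SDP_fin; set m := fine _.
have SDP_m : r_SDP xig xit P qhon F = m%:E by rewrite fineK.
have [J0 J0_choi] : exists J0 : choi_op, is_choi J0.
  apply: contrapT => no_choi; move: SDP_fin.
  suff -> : r_SDP xig xit P qhon F = +oo%E by [].
  by apply/ereal_inf_pinfty => z [J [_ [_ [J_choi _]]]]; case: no_choi; exists J.
apply: (@lagrange_multiplier _ _ _ feasD resD (fun x => F (rhoJ xig x.1.1) x.2)).
- move=> x y t feas_x feas_y /andP[t_gt0 t_lt1]; exists (mixD x y t); split.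
  + by apply: feasD_mix; rewrite ?ltW.
  + exact: resD_mix.
  + by apply: F_convex => //; rewrite t_gt0.
- exact: resD_surj J0_choi.
- move=> x [J_choi box] res0; rewrite -lee_fin -SDP_m; apply: ereal_inf_lbound.
  by exists x.1.1, x.1.2, x.2; split; [|split; [move=> c; apply: res0|split]].
Qed.

Lemma r_best_le_primal1 :
  (r_best W xig xit P phi0 phi1 qhon <= primal1 W xig xit P phi0 phi1 qhon)%E.
Proof.
apply: ge_ereal_sup => _ [g [k [g_mtf ->]]].
apply: le_ereal_inf_tmp => _ [J [l [J_choi [eqc ->]]]].
rewrite /TstarHat; case: ifP => [/eqP l_sum0|_]; last by rewrite addey // leey.
rewrite -EFinD lee_fin.
have mtf_J : (dotv g (Phi P (rhoJ xit J)) + k <= W (rhoJ xig J))%R.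
  rewrite -lee_fin; apply: le_trans (g_mtf _ (prob_Phi_rhoJ xit_unit P_povm J_choi)) _.
  by apply: ereal_inf_lbound; exists J.
have [c0 _] := outcome_exists.
have := fenchel_young_That phi1 phi0_gt0 c0 g l_sum0.
have -> : dotv g qhon = dotv g (Phi P (rhoJ xit J)) + dotv g l.
  rewrite /dotv -big_split; apply: eq_bigr => c _ /=; rewrite -mulrDr.
  by congr (_ * _); have := eqc c; lra.
lra.
Qed.

Lemma sum_eq_constr (J : choi_op) (l : Cc -> R) :
  is_choi J -> eq_constr xit P qhon J l -> \sum_c l c = 0.
Proof.
move=> J_choi eqc.
rewrite (eq_bigr (fun c => qhon c - Phi P (rhoJ xit J) c)); last first.
  by move=> c _; have := eqc c; lra.
by rewrite sumrB qhon_prob.2 (sum_Phi P_povm (trace_rhoJ xit_unit J_choi)) subrr.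
Qed.

Lemma primal1_le_primal2 :
  (primal1 W xig xit P phi0 phi1 qhon <= primal2 W xig xit P phi0 phi1 qhon)%E.
Proof.
apply: le_ereal_inf_tmp => _ [J [l [nu [J_choi [eqc [box ->]]]]]].
apply: le_trans (_ : _ <= (W (rhoJ xig J))%:E + TstarHat phi0 phi1 l)%E _.
  by apply: ereal_inf_lbound; exists J, l.
rewrite /TstarHat (sum_eq_constr J_choi eqc) eqxx -EFinD lee_fin lerD2l.
apply: sfun_mono => //; rewrite ler_pM2r ?invr_gt0 ?ltr0n //.
by apply: ler_sum => c _; rewrite ler_norml.
Qed.

Lemma penalised_W_convex x y t : feasD x -> feasD y -> 0 < t < 1 ->
  penalised_W (rhoJ xig (mixD x y t).1.1) (mixD x y t).2 <=
  t * penalised_W (rhoJ xig x.1.1) x.2 + (1 - t) * penalised_W (rhoJ xig y.1.1) y.2.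
Proof.
move=> [Jx_choi _] [Jy_choi _] /andP[t_gt0 t_lt1]; have t01 : 0 <= t <= 1 by rewrite !ltW.
rewrite /= rhoJ_comb.
have := W_convex (state_rhoJ xig_unit Jx_choi) (state_rhoJ xig_unit Jy_choi) t01.
have -> : (\sum_c (t * x.2 c + (1 - t) * y.2 c)) / 2 =
    t * ((\sum_c x.2 c) / 2) + (1 - t) * ((\sum_c y.2 c) / 2).
  by rewrite big_split /= -!mulr_sumr; ring.
have := sfun_convex phi1 phi0_gt0 ((\sum_c x.2 c) / 2) ((\sum_c y.2 c) / 2) t01.
lra.
Qed.

Lemma primal2_le_r_best :
  (primal2 W xig xit P phi0 phi1 qhon <= r_best W xig xit P phi0 phi1 qhon)%E.
Proof.
case: (pselect (exists J0 : choi_op, is_choi J0)) => [[J0 J0_choi]|no_choi]; last first.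
  suff -> : r_best W xig xit P phi0 phi1 qhon = +oo%E by rewrite leey.
  apply: eq_infty => m.
  apply: (le_r_best_of_dual_bound (F := penalised_W) (g := fun=> 0)) => //.
  by move=> x [J_choi _]; case: no_choi; exists x.1.1.
have -> : primal2 W xig xit P phi0 phi1 qhon = r_SDP xig xit P qhon penalised_W by [].
have [x0 feas_x0 res_x0] := resD_surj J0_choi (fun=> 0).
have SDP_fin : r_SDP xig xit P qhon penalised_W \is a fin_num.
  rewrite ge0_fin_numE.
    apply: le_lt_trans (ltry (penalised_W (rhoJ xig x0.1.1) x0.2)).
    apply: ereal_inf_lbound; exists x0.1.1, x0.1.2, x0.2.
    case: feas_x0 => J_choi box; split=> //; split=> [c|]; last by split.
    by rewrite -/(resD x0 c) res_x0.
  apply: le_ereal_inf_tmp => _ [J [l [nu [J_choi [_ [_ ->]]]]]].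
  by rewrite lee_fin addr_ge0 ?sfun_ge0 // W_ge0 //; apply: state_rhoJ.
have [g dual_bound] := r_SDP_dual_attained penalised_W_convex SDP_fin.
rewrite -(fineK SDP_fin).
exact: (le_r_best_of_dual_bound (F := penalised_W) dual_bound).
Qed.

Section AffineRelaxation.
Variable L : op R (A * B)%type -> (Cc -> R) -> R.
Hypothesis SDP_fin : r_SDP xig xit P qhon L \is a fin_num.

Lemma lagr_dual_ge_of_dual_bound gs m :
  (forall x, feasD x -> m <= L (rhoJ xig x.1.1) x.2 + dotv gs (resD x)) ->
  (m%:E <= lagr_dual xig xit P qhon L gs)%E.
Proof.
move=> dual_bound; apply: le_ereal_inf_tmp => _ [J [l [nu [J_choi [box ->]]]]].
by rewrite lee_fin; apply: (dual_bound (J, l, nu)).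
Qed.

Lemma lagr_dual_le_r_SDP gs :
  (lagr_dual xig xit P qhon L gs <= r_SDP xig xit P qhon L)%E.
Proof.
apply: le_ereal_inf_tmp => _ [J [l [nu [J_choi [eqc [box ->]]]]]].
apply: ereal_inf_lbound; exists J, l, nu; do 2!split=> //.
by rewrite /dotv big1 ?addr0 // => c _; rewrite eqc mulr0.
Qed.

Lemma r_SDP_eq_lagr_dual : is_affine_L L ->
  exists gs, r_SDP xig xit P qhon L = lagr_dual xig xit P qhon L gs.
Proof.
move=> L_affine.
have [gs dual_bound] : exists gs, forall x, feasD x ->
    fine (r_SDP xig xit P qhon L) <= L (rhoJ xig x.1.1) x.2 + dotv gs (resD x).
  apply: r_SDP_dual_attained SDP_fin => x y t _ _ _.
  by rewrite /= rhoJ_comb L_affine.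
exists gs; apply/le_anti; rewrite lagr_dual_le_r_SDP andbT.
by rewrite -(fineK SDP_fin); apply: lagr_dual_ge_of_dual_bound.
Qed.

Lemma crossover_mtf_of_lagr_dual gs :
  (forall J nu, is_choi J -> L (rhoJ xig J) nu <= penalised_W (rhoJ xig J) nu) ->
  r_SDP xig xit P qhon L = lagr_dual xig xit P qhon L gs ->
  exists k, is_crossover_mtf W xig xit P gs k /\
    (r_SDP xig xit P qhon L <= (dotv gs qhon + k - That phi0 phi1 gs)%:E)%E.
Proof.
move=> L_le SDP_eq; set m := fine (r_SDP xig xit P qhon L).
have SDP_m : r_SDP xig xit P qhon L = m%:E by rewrite fineK.
exists (m - dotv gs qhon + That phi0 phi1 gs); split; last by rewrite SDP_m lee_fin; lra.
apply: crossover_mtf_of_dual_bound L_le => x [J_choi box].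
rewrite -lee_fin -SDP_m SDP_eq; apply: ereal_inf_lbound.
by exists x.1.1, x.1.2, x.2.
Qed.
End AffineRelaxation.
End CrossoverDuality.
Unset Implicit Arguments.

Theorem mainTheorem2 (R : realType) (A Ap B Cc : finType)
  (xig xit : (A * Ap)%type -> R[i]) (W : op R (A * B)%type -> R)
  (P : Cc -> op R (A * B)%type) (phi0 phi1 : R) (qhon : Cc -> R) :
  is_unit_vector xig -> is_unit_vector xit ->
  (forall rho : op R (A * B)%type, is_state rho -> 0 <= W rho) ->
  convex_on_states W ->
  is_povm P ->
  0 < phi0 -> 0 <= phi1 ->
  is_prob qhon ->
  (r_best W xig xit P phi0 phi1 qhon = primal1 W xig xit P phi0 phi1 qhon /\
   primal1 W xig xit P phi0 phi1 qhon = primal2 W xig xit P phi0 phi1 qhon) /\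
  (forall L : op R (A * B)%type -> (Cc -> R) -> R,
    is_affine_L L ->
    (forall (J : op R (Ap * B)%type) (nu : Cc -> R), is_choi J ->
       L (rhoJ xig J) nu <= W (rhoJ xig J) + sfun phi0 phi1 ((\sum_c nu c) / 2)) ->
    r_SDP xig xit P qhon L \is a fin_num ->
    (exists gs : Cc -> R,
       r_SDP xig xit P qhon L = lagr_dual xig xit P qhon L gs) /\
    (forall gs : Cc -> R,
       r_SDP xig xit P qhon L = lagr_dual xig xit P qhon L gs ->
       exists k : R, is_crossover_mtf W xig xit P gs k /\
         (r_SDP xig xit P qhon L <= (dotv gs qhon + k - That phi0 phi1 gs)%:E)%E)).
Proof.
move=> xig_unit xit_unit W_ge0 W_convex P_povm phi0_gt0 phi1_ge0 qhon_prob.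
have rb_le_p1 := r_best_le_primal1 xig W phi1 xit_unit P_povm phi0_gt0 qhon_prob.
have p1_le_p2 := primal1_le_primal2 xig W phi1 xit_unit P_povm phi0_gt0 qhon_prob.
have p2_le_rb := primal2_le_r_best xit P xig_unit W_ge0 W_convex phi0_gt0 phi1_ge0 qhon_prob.
split.
  split; apply/le_anti/andP; split=> //; [exact: le_trans p2_le_rb | exact: le_trans rb_le_p1].
move=> L L_affine L_le SDP_fin; split; first exact: r_SDP_eq_lagr_dual.
by move=> gs; apply: crossover_mtf_of_lagr_dual.
Qed.
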